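(* The Galois structure $\Gamma_C=(\mathsf{PreOrdGrp},\mathsf{PreOrdAb},C,V,\mathscr{E}_C,\mathscr{Z}_C)$ is admissible; that is, for every preordered group $B$, every preordered abelian group $X$ and every regular epimorphism $\phi\colon X\to C(B)$ in $\mathsf{PreOrdAb}$, the functor $C$ sends the pullback in $\mathsf{PreOrdGrp}$ of $V(\phi)$ along the unit $\eta_B\colon B\to VC(B)$ to a pullback in $\mathsf{PreOrdAb}$.
   Context: A preordered group is a pair $(G,P_G)$ where $G$ is a group (additively written) and $P_G\subseteq G$ a submonoid closed under conjugation; morphisms are group homomorphisms $f$ with $f(P_G)\subseteq P_H$. This is $\mathsf{PreOrdGrp}$; $\mathsf{PreOrdAb}$ is the full subcategory with $G$ abelian, $V$ the inclusion. $C$ is the left adjoint of $V$: $C(G,P_G)=(G/[G,G],\eta_G(P_G))$ with $\eta_G$ the abelianization quotient, unit $(\eta_G,\eta_G|_{P_G})$; the counit is an isomorphism. Limits in $\mathsf{PreOrdGrp}$ are computed componentwise. $\mathscr{E}_C$ (resp. $\mathscr{Z}_C$) is the class of regular epimorphisms of $\mathsf{PreOrdGrp}$ (resp. $\mathsf{PreOrdAb}$), namely morphisms $(f,\bar f)$ with both $f$ and $\bar f$ surjective. In general, a Galois structure $(\mathscr C,\mathscr F,F,U,\mathscr E,\mathscr Z)$ (adjunction $F\dashv U$ with classes of morphisms $\mathscr E$, $\mathscr Z$ stable under pullback and composition, containing isomorphisms, with $F(\mathscr E)\subseteq\mathscr Z$, $U(\mathscr Z)\subseteq\mathscr E$) is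 admissible when, for each $B$, the counit of the induced adjunction between extensions of $B$ in $\mathscr E$ and extensions of $F(B)$ in $\mathscr Z$ (left adjoint $F$, right adjoint pulling back $U(\phi)$ along the unit $\eta_B$) is an isomorphism; when the counit of $F\dashv U$ is an isomorphism, this is equivalent to the pullback-preservation condition stated in the claim. *)

From Stdlib Require Import ClassicalEpsilon FunctionalExtensionality
  PropExtensionality ProofIrrelevance.

Set Implicit Arguments.

(* Raw data of a preordered group (additively written, not necessarily      *)
(* abelian): carrier, +, 0, -, and the positive cone P.                     *)
Record PGrp := MkPGrp {
  car :> Type;
  gadd : car -> car -> car;
  gzero : car;
  gopp : car -> car;
  gpos : car -> Prop }.

Arguments gadd {p} _ _.
Arguments gzero {p}.
Arguments gopp {p} _.
Arguments gpos {p} _.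

Definition is_group (G : PGrp) : Prop :=
  (forall a b c : G, gadd a (gadd b c) = gadd (gadd a b) c) /\
  (forall a : G, gadd gzero a = a) /\
  (forall a : G, gadd a gzero = a) /\
  (forall a : G, gadd (gopp a) a = gzero) /\
  (forall a : G, gadd a (gopp a) = gzero).

Definition is_preordgrp (G : PGrp) : Prop :=
  is_group G /\
  gpos (@gzero G) /\
  (forall a b : G, gpos a -> gpos b -> gpos (gadd a b)) /\
  (forall g a : G, gpos a -> gpos (gadd (gadd g a) (gopp g))).

Definition is_abelian (G : PGrp) : Prop := forall a b : G, gadd a b = gadd b a.

Record PreOrdGrp := MkPreOrdGrp { pg :> PGrp; pg_ax : is_preordgrp pg }.

Definition is_hom (G H : PGrp) (f : G -> H) : Prop :=
  (forall a b : G, f (gadd a b) = gadd (f a) (f b)) /\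
  f gzero = gzero /\
  (forall a : G, f (gopp a) = gopp (f a)) /\
  (forall a : G, gpos a -> gpos (f a)).

Inductive Comm (G : PGrp) : car G -> Prop :=
| Comm_gen : forall a b : G, Comm G (gadd (gadd (gadd a b) (gopp a)) (gopp b))
| Comm_zero : Comm G gzero
| Comm_add : forall x y : G, Comm G x -> Comm G y -> Comm G (gadd x y)
| Comm_opp : forall x : G, Comm G x -> Comm G (gopp x)
| Comm_conj : forall g x : G, Comm G x -> Comm G (gadd (gadd g x) (gopp g)).
Arguments Comm {G} _.

Definition cls (G : PGrp) (g : G) : G -> Prop := fun h => Comm (gadd h (gopp g)).
Arguments cls {G} _ _.

Definition Cab_car (G : PGrp) : Type := {S : G -> Prop | exists g : G, S = cls g}.

Definition eta (G : PGrp) (g : G) : Cab_car G :=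
  exist (fun S => exists g0 : G, S = cls g0) (cls g) (ex_intro _ g eq_refl).
Arguments eta {G} _.

Definition rep (G : PGrp) (S : Cab_car G) : G :=
  proj1_sig (constructive_indefinite_description _ (proj2_sig S)).
Arguments rep {G} _.

Definition Cab (G : PGrp) : PGrp :=
  @MkPGrp (Cab_car G)
    (fun S T => eta (gadd (rep S) (rep T)))
    (eta gzero)
    (fun S => eta (gopp (rep S)))
    (fun S => exists g : G, gpos g /\ eta g = S).

Definition Cmap (G H : PGrp) (f : G -> H) : Cab G -> Cab H :=
  fun S => eta (f (rep S)).

Section GroupFacts.
Variable G : PGrp.
Hypothesis hG : is_group G.

Let assoc : forall a b c : G, gadd a (gadd b c) = gadd (gadd a b) c.
Proof. apply hG. Qed.
Let idl : forall a : G, gadd gzero a = a.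
Proof. apply hG. Qed.
Let idr : forall a : G, gadd a gzero = a.
Proof. apply hG. Qed.
Let invl : forall a : G, gadd (gopp a) a = gzero.
Proof. apply hG. Qed.
Let invr : forall a : G, gadd a (gopp a) = gzero.
Proof. apply hG. Qed.

Lemma grp_opp_opp (a : G) : gopp (gopp a) = a.
Proof.
  rewrite <- (idr (gopp (gopp a))), <- (invl a), assoc, invl, idl. reflexivity.
Qed.

Lemma grp_opp_add (a b : G) : gopp (gadd a b) = gadd (gopp b) (gopp a).
Proof.
  assert (H : gadd (gadd a b) (gadd (gopp b) (gopp a)) = gzero).
  { rewrite <- assoc, (assoc b), invr, idl, invr. reflexivity. }
  rewrite <- (idr (gopp (gadd a b))), <- H, assoc, invl, idl. reflexivity.
Qed.

Lemma cls_eq (a b : G) : Comm (gadd a (gopp b)) -> cls a = cls b.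
Proof.
  intro Hab. unfold cls. apply functional_extensionality. intro h.
  apply propositional_extensionality. split; intro H.
  - replace (gadd h (gopp b)) with (gadd (gadd h (gopp a)) (gadd a (gopp b))).
    + now apply Comm_add.
    + rewrite <- assoc, (assoc (gopp a)), invl, idl. reflexivity.
  - replace (gadd h (gopp a)) with (gadd (gadd h (gopp b)) (gopp (gadd a (gopp b)))).
    + apply Comm_add; [assumption | now apply Comm_opp].
    + rewrite grp_opp_add, grp_opp_opp, <- assoc, (assoc (gopp b)), invl, idl.
      reflexivity.
Qed.

Lemma cls_inv (a b : G) : cls a = cls b -> Comm (gadd a (gopp b)).
Proof.
  intro H. change (cls b a). rewrite <- H. unfold cls. rewrite invr.
  apply Comm_zero.
Qed.

Lemma eta_eq (a b : G) : Comm (gadd a (gopp b)) -> eta a = eta b.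
Proof.
  intro H. unfold eta. generalize (ex_intro (fun g0 : G => cls a = cls g0) a eq_refl).
  generalize (ex_intro (fun g0 : G => cls b = cls g0) b eq_refl).
  rewrite (@cls_eq a b H). intros e1 e2. f_equal. apply proof_irrelevance.
Qed.

Lemma rep_eta (a : G) : Comm (gadd a (gopp (rep (eta a)))).
Proof.
  unfold rep. destruct (constructive_indefinite_description _ _) as [r Hr].
  simpl in *. now apply cls_inv.
Qed.

Lemma eta_add (a b : G) :
  eta (gadd a b) = @gadd (Cab G) (eta a) (eta b).
Proof.
  simpl. apply eta_eq.
  set (a' := rep (eta a)). set (b' := rep (eta b)).
  pose proof (rep_eta a) as Ha. pose proof (rep_eta b) as Hb.
  fold a' in Ha. fold b' in Hb.
  replace (gadd (gadd a b) (gopp (gadd a' b')))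
    with (gadd (gadd (gadd a (gadd b (gopp b'))) (gopp a)) (gadd a (gopp a'))).
  - apply Comm_add; [apply Comm_conj|]; assumption.
  - rewrite grp_opp_add.
    rewrite <- (assoc (gadd a (gadd b (gopp b')))), (assoc (gopp a)), invl, idl.
    rewrite <- !assoc. reflexivity.
Qed.

Lemma eta_opp (a : G) : eta (gopp a) = @gopp (Cab G) (eta a).
Proof.
  simpl. apply eta_eq. set (a' := rep (eta a)).
  pose proof (rep_eta a) as Ha. fold a' in Ha.
  replace (gadd (gopp a) (gopp (gopp a')))
    with (gadd (gadd (gopp a) (gopp (gadd a (gopp a')))) (gopp (gopp a))).
  - apply Comm_conj, Comm_opp, Ha.
  - rewrite grp_opp_add, !grp_opp_opp, <- !assoc, invl, idr. reflexivity.
Qed.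

End GroupFacts.

Section Pullback.
Variables (B : PreOrdGrp) (X : PGrp) (phi : X -> Cab B).
Hypothesis hphi : is_hom X (Cab B) phi.

Definition pb_car : Type := {p : B * X | eta (fst p) = phi (snd p)}.

Let hB : is_group B := proj1 (pg_ax B).

Definition pb_add (p q : pb_car) : pb_car.
Proof.
  refine (exist _ (gadd (fst (proj1_sig p)) (fst (proj1_sig q)),
                   gadd (snd (proj1_sig p)) (snd (proj1_sig q))) _).
  destruct p as [[b x] Hp], q as [[b' x'] Hq]; simpl in *.
  rewrite (eta_add hB), (proj1 hphi), Hp, Hq. reflexivity.
Defined.

Definition pb_zero : pb_car.
Proof.
  refine (exist _ (gzero, gzero) _). simpl.
  rewrite (proj1 (proj2 hphi)). reflexivity.
Defined.

Definition pb_opp (p : pb_car) : pb_car.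
Proof.
  refine (exist _ (gopp (fst (proj1_sig p)), gopp (snd (proj1_sig p))) _).
  destruct p as [[b x] Hp]; simpl in *.
  rewrite (eta_opp hB), (proj1 (proj2 (proj2 hphi))), Hp. reflexivity.
Defined.

Definition pullback : PGrp :=
  @MkPGrp pb_car pb_add pb_zero pb_opp
    (fun p => gpos (fst (proj1_sig p)) /\ gpos (snd (proj1_sig p))).

Definition pb_fst : pullback -> B := fun p => fst (proj1_sig p).
Definition pb_snd : pullback -> X := fun p => snd (proj1_sig p).

End Pullback.

Definition is_pullback_ab (Pv A1 A2 D : PGrp)
  (p1 : Pv -> A1) (p2 : Pv -> A2) (f1 : A1 -> D) (f2 : A2 -> D) : Prop :=
  is_hom Pv A1 p1 /\ is_hom Pv A2 p2 /\ is_hom A1 D f1 /\ is_hom A2 D f2 /\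
  (forall s : Pv, f1 (p1 s) = f2 (p2 s)) /\
  forall (Z : PreOrdGrp), is_abelian Z ->
  forall (u : Z -> A1) (v : Z -> A2),
    is_hom Z A1 u -> is_hom Z A2 v -> (forall z : Z, f1 (u z) = f2 (v z)) ->
    exists! w : Z -> Pv,
      is_hom Z Pv w /\ (forall z, p1 (w z) = u z) /\ (forall z, p2 (w z) = v z).

Arguments Cmap {G H} f _.
Arguments pullback : clear implicits.
Arguments pb_fst : clear implicits.
Arguments pb_snd : clear implicits.
Arguments is_hom : clear implicits.

(* the unit eta_B : B -> VC(B) of the adjunction C -| V, as a map into Cab B *)
Definition unit_eta (G : PGrp) : G -> Cab G := fun g => eta g.

(** Since X is abelian, C(X) = X, and C(π_X) : C(P) → C(X), for P = B ×_{C(B)} X,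
    is an isomorphism of preordered groups.  It is onto because every x lifts to
    (rep (φ x), x), and onto the positive cone because φ sends a positive x to the
    class of a positive b, so that (b, x) is positive in P.  It is injective
    because an element (b, 0) with b ∈ [B,B] lies in [P,P]: using that φ is onto,
    each commutator of B lifts to a commutator of P, whose X-component vanishes
    because X is abelian.  Since C(η_B) is injective too, the square is a pullback. *)

From Stdlib Require Import ClassicalEpsilon FunctionalExtensionality ProofIrrelevance.

Set Implicit Arguments.
Unset Strict Implicit.

Section GroupLaws.
Variable G : PGrp.
Hypothesis hG : is_group G.

Lemma gaddA (a b c : G) : gadd a (gadd b c) = gadd (gadd a b) c. Proof. apply hG. Qed.
Lemma gadd0l (a : G) : gadd gzero a = a. Proof. apply hG. Qed.
Lemma gadd0r (a : G) : gadd a gzero = a. Proof. apply hG. Qed.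
Lemma gaddNl (a : G) : gadd (gopp a) a = gzero. Proof. apply hG. Qed.
Lemma gaddNr (a : G) : gadd a (gopp a) = gzero. Proof. apply hG. Qed.

Lemma gopp0 : gopp (@gzero G) = gzero.
Proof. rewrite <- (gadd0r (gopp gzero)). apply gaddNl. Qed.

Lemma gsub_eq0 (a b : G) : gadd a (gopp b) = gzero -> a = b.
Proof. intro H. rewrite <- (gadd0r a), <- (gaddNl b), gaddA, H, gadd0l. reflexivity. Qed.

Lemma Comm_abelian_eq0 (hab : is_abelian G) (a : G) : Comm a -> a = gzero.
Proof.
  induction 1 as [a b| |x y _ IHx _ IHy|x _ IHx|g x _ IHx].
  - rewrite (hab a b), <- (gaddA b a), gaddNr, gadd0r, gaddNr. reflexivity.
  - reflexivity.
  - rewrite IHx, IHy, gadd0l. reflexivity.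
  - rewrite IHx, gopp0. reflexivity.
  - rewrite IHx, gadd0r, gaddNr. reflexivity.
Qed.

End GroupLaws.

Lemma eta_rep (G : PGrp) (S : Cab G) : eta (rep S) = S.
Proof.
  destruct S as [S HS]. unfold rep; simpl.
  destruct (constructive_indefinite_description _ HS) as [r Hr]; simpl.
  unfold eta. subst S. f_equal. apply proof_irrelevance.
Qed.

Lemma etaP (G : PGrp) (S : Cab G) : exists a : G, S = eta a.
Proof. exists (rep S). symmetry. apply eta_rep. Qed.

Section Abelianization.
Variable G : PGrp.
Hypothesis hG : is_group G.

Lemma eta_Comm (a b : G) : eta a = eta b -> Comm (gadd a (gopp b)).
Proof. intro H. apply (cls_inv hG). exact (f_equal (@proj1_sig _ _) H). Qed.

Lemma eta_inj_abelian (hab : is_abelian G) (a b : G) : eta a = eta b -> a = b.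
Proof. intro H. apply (gsub_eq0 hG), (Comm_abelian_eq0 hG hab), eta_Comm, H. Qed.

Lemma Cab_group : is_group (Cab G).
Proof.
  repeat split.
  - intros S T U. destruct (etaP S) as [a ->], (etaP T) as [b ->], (etaP U) as [c ->].
    rewrite <- !(eta_add hG), (gaddA hG). reflexivity.
  - intro S. destruct (etaP S) as [a ->].
    change (@gzero (Cab G)) with (eta (@gzero G)).
    rewrite <- (eta_add hG), (gadd0l hG). reflexivity.
  - intro S. destruct (etaP S) as [a ->].
    change (@gzero (Cab G)) with (eta (@gzero G)).
    rewrite <- (eta_add hG), (gadd0r hG). reflexivity.
  - intro S. destruct (etaP S) as [a ->].
    rewrite <- (eta_opp hG), <- (eta_add hG), (gaddNl hG). reflexivity.
  - intro S. destruct (etaP S) as [a ->].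
    rewrite <- (eta_opp hG), <- (eta_add hG), (gaddNr hG). reflexivity.
Qed.

Lemma Cab_abelian : is_abelian (Cab G).
Proof.
  intros S T. destruct (etaP S) as [a ->], (etaP T) as [b ->].
  rewrite <- !(eta_add hG). apply (eta_eq hG).
  rewrite (grp_opp_add hG), (gaddA hG). apply Comm_gen.
Qed.

Lemma unit_eta_hom : is_hom G (Cab G) (unit_eta G).
Proof.
  repeat split.
  - intros; apply (eta_add hG).
  - intros; apply (eta_opp hG).
  - intros g Hg. exists g. split; auto.
Qed.

End Abelianization.

Section Functoriality.
Variables G H : PGrp.
Hypotheses (hG : is_group G) (hH : is_group H).
Variable f : G -> H.
Hypothesis hf : is_hom G H f.

Lemma hom_Comm (a : G) : Comm a -> Comm (f a).
Proof.
  destruct hf as (fadd & f0 & fopp & _).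
  induction 1.
  - rewrite !fadd, !fopp. apply Comm_gen.
  - rewrite f0. apply Comm_zero.
  - rewrite fadd. apply Comm_add; assumption.
  - rewrite fopp. apply Comm_opp; assumption.
  - rewrite !fadd, fopp. apply Comm_conj; assumption.
Qed.

Lemma Cmap_eta (a : G) : Cmap f (eta a) = eta (f a).
Proof.
  destruct hf as (fadd & _ & fopp & _).
  apply (eta_eq hH). pose proof (rep_eta hG a) as R.
  apply Comm_opp in R. rewrite (grp_opp_add hG), (grp_opp_opp hG) in R.
  apply hom_Comm in R. rewrite fadd, fopp in R. exact R.
Qed.

Lemma Cmap_hom : is_hom (Cab G) (Cab H) (Cmap f).
Proof.
  pose proof hf as (fadd & f0 & fopp & fpos).
  repeat split.
  - intros S T. destruct (etaP S) as [a ->], (etaP T) as [b ->].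
    rewrite <- (eta_add hG), !Cmap_eta, fadd, (eta_add hH). reflexivity.
  - change (@gzero (Cab G)) with (eta (@gzero G)). rewrite Cmap_eta, f0. reflexivity.
  - intro S. destruct (etaP S) as [a ->].
    rewrite <- (eta_opp hG), !Cmap_eta, fopp, (eta_opp hH). reflexivity.
  - intros S [g [Hg <-]]. rewrite Cmap_eta. exists (f g). split; auto.
Qed.

End Functoriality.

Lemma Cmap_unit_eta_inj (G : PGrp) (hG : is_group G) (S T : Cab G) :
  Cmap (unit_eta G) S = Cmap (unit_eta G) T -> S = T.
Proof.
  destruct (etaP S) as [a ->], (etaP T) as [b ->].
  pose proof (Cmap_eta hG (Cab_group hG) (unit_eta_hom hG)) as E.
  rewrite !E. apply (eta_inj_abelian (Cab_group hG) (Cab_abelian hG)).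
Qed.

Lemma is_pullback_ab_of_iso_mono (Pv A1 A2 D : PGrp)
  (p1 : Pv -> A1) (p2 : Pv -> A2) (f1 : A1 -> D) (f2 : A2 -> D) :
  is_hom Pv A1 p1 -> is_hom Pv A2 p2 -> is_hom A1 D f1 -> is_hom A2 D f2 ->
  (forall s : Pv, f1 (p1 s) = f2 (p2 s)) ->
  (forall s t : Pv, p2 s = p2 t -> s = t) ->
  (forall a : A2, exists s : Pv, p2 s = a) ->
  (forall a : A2, gpos a -> exists s : Pv, gpos s /\ p2 s = a) ->
  (forall a b : A1, f1 a = f1 b -> a = b) ->
  is_pullback_ab Pv A1 A2 D p1 p2 f1 f2.
Proof.
  intros hp1 hp2 hf1 hf2 square p2_inj p2_surj p2_pos f1_inj.
  pose proof hp2 as (p2add & p2zero & p2opp & _).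
  do 5 (split; [assumption|]).
  intros Z _ u v hu hv huv.
  set (w := fun z => proj1_sig (constructive_indefinite_description _ (p2_surj (v z)))).
  assert (p2w : forall z, p2 (w z) = v z)
    by (intro z; unfold w; apply proj2_sig).
  destruct hv as (vadd & vzero & vopp & vpos).
  exists w. repeat split.
  - intros a b. apply p2_inj. rewrite p2add, !p2w. apply vadd.
  - apply p2_inj. rewrite p2zero, p2w. apply vzero.
  - intro a. apply p2_inj. rewrite p2opp, !p2w. apply vopp.
  - intros a Ha. destruct (p2_pos _ (vpos a Ha)) as [s [Hs Es]].
    replace (w a) with s; [exact Hs|]. apply p2_inj. rewrite p2w. exact Es.
  - intro z. apply f1_inj. rewrite square, p2w. symmetry. apply huv.
  - exact p2w.
  - intros w' (_ & _ & p2w'). apply functional_extensionality. intro z.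
    apply p2_inj. rewrite p2w, p2w'. reflexivity.
Qed.

Section PullbackAlongUnit.
Variables B X : PreOrdGrp.
Variable phi : X -> Cab B.
Hypothesis hphi : is_hom X (Cab B) phi.

Let hB : is_group B := proj1 (pg_ax B).
Let hX : is_group X := proj1 (pg_ax X).
Local Notation P := (pullback B X phi hphi).
Local Notation pi_B := (pb_fst B X phi hphi).
Local Notation pi_X := (pb_snd B X phi hphi).

Definition pb_pair (b : B) (x : X) (E : eta b = phi x) : P :=
  exist (fun p : B * X => eta (fst p) = phi (snd p)) (b, x) E.

Lemma pb_eq (p q : P) : pi_B p = pi_B q -> pi_X p = pi_X q -> p = q.
Proof.
  destruct p as [[b x] Hp], q as [[b' x'] Hq]. unfold pb_fst, pb_snd; simpl.
  intros -> ->. f_equal. apply proof_irrelevance.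
Qed.

Lemma pullback_group : is_group P.
Proof.
  repeat split; intros; apply pb_eq; simpl.
  all: first [apply (gaddA hB) | apply (gaddA hX) | apply (gadd0l hB) | apply (gadd0l hX)
             | apply (gadd0r hB) | apply (gadd0r hX) | apply (gaddNl hB) | apply (gaddNl hX)
             | apply (gaddNr hB) | apply (gaddNr hX)].
Qed.

Lemma pb_fst_hom : is_hom P B pi_B.
Proof. repeat split. intros p Hp. exact (proj1 Hp). Qed.

Lemma pb_snd_hom : is_hom P X pi_X.
Proof. repeat split. intros p Hp. exact (proj2 Hp). Qed.

Lemma pb_square_commutes (s : Cab P) :
  Cmap (unit_eta B) (Cmap pi_B s) = Cmap phi (Cmap pi_X s).
Proof.
  pose proof (Cab_group hB) as hCB.
  destruct (etaP s) as [[[b x] Hp] ->].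
  rewrite (Cmap_eta pullback_group hB pb_fst_hom), (Cmap_eta pullback_group hX pb_snd_hom),
    (Cmap_eta hB hCB (unit_eta_hom hB)), (Cmap_eta hX hCB hphi).
  unfold unit_eta, pb_fst, pb_snd; simpl in *. rewrite Hp. reflexivity.
Qed.

Lemma Cmap_pb_snd_surj (y : Cab X) : exists s : Cab P, Cmap pi_X s = y.
Proof.
  destruct (etaP y) as [x ->].
  exists (eta (pb_pair (eta_rep (phi x)))).
  apply (Cmap_eta pullback_group hX pb_snd_hom).
Qed.

Lemma Cmap_pb_snd_pos_surj (y : Cab X) :
  gpos y -> exists s : Cab P, gpos s /\ Cmap pi_X s = y.
Proof.
  intros [x [Hx <-]].
  destruct (proj2 (proj2 (proj2 hphi)) x Hx) as [b [Hb E]].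
  exists (eta (pb_pair E)). split.
  - exists (pb_pair E). split; [split; assumption | reflexivity].
  - apply (Cmap_eta pullback_group hX pb_snd_hom).
Qed.

Section Injectivity.
Hypothesis hXab : is_abelian X.
Hypothesis hsurj : forall c : Cab B, exists x : X, phi x = c.

Lemma pb_lift (b : B) : exists p : P, pi_B p = b.
Proof. destruct (hsurj (eta b)) as [x E]. exists (pb_pair (eq_sym E)). reflexivity. Qed.

Lemma pb_lift_Comm (b : B) : Comm b -> exists p : P, pi_B p = b /\ pi_X p = gzero.
Proof.
  intro Hb.
  assert (E : eta b = phi gzero).
  { rewrite (proj1 (proj2 hphi)). apply (eta_eq hB).
    rewrite (gopp0 hB), (gadd0r hB). exact Hb. }
  exists (pb_pair E). split; reflexivity.
Qed.

Lemma pb_Comm_of_fst_Comm (b : B) :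
  Comm b -> forall p : P, pi_B p = b -> pi_X p = gzero -> Comm p.
Proof.
  induction 1 as [a c| |b1 b2 H1 IH1 H2 IH2|b1 H1 IH|g b1 H1 IH]; intros p Hf Hs.
  - destruct (pb_lift a) as [pa Ea], (pb_lift c) as [pc Ec].
    replace p with (@gadd P (@gadd P (@gadd P pa pc) (@gopp P pa)) (@gopp P pc));
      [apply Comm_gen|].
    apply pb_eq; unfold pb_fst, pb_snd in *; simpl; rewrite ?Hf, ?Hs, ?Ea, ?Ec;
      [reflexivity|].
    apply (Comm_abelian_eq0 hX hXab), Comm_gen.
  - replace p with (@gzero P); [apply Comm_zero|].
    apply pb_eq; symmetry; assumption.
  - destruct (pb_lift_Comm H1) as [p1 [F1 S1]], (pb_lift_Comm H2) as [p2 [F2 S2]].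
    replace p with (@gadd P p1 p2); [apply Comm_add; [apply IH1 | apply IH2]; assumption|].
    apply pb_eq; unfold pb_fst, pb_snd in *; simpl;
      rewrite ?Hf, ?Hs, ?F1, ?F2, ?S1, ?S2, ?(gadd0l hX); reflexivity.
  - destruct (pb_lift_Comm H1) as [p1 [F1 S1]].
    replace p with (@gopp P p1); [apply Comm_opp, IH; assumption|].
    apply pb_eq; unfold pb_fst, pb_snd in *; simpl;
      rewrite ?Hf, ?Hs, ?F1, ?S1, ?(gopp0 hX); reflexivity.
  - destruct (pb_lift_Comm H1) as [p1 [F1 S1]], (pb_lift g) as [pg Eg].
    replace p with (@gadd P (@gadd P pg p1) (@gopp P pg)); [apply Comm_conj, IH; assumption|].
    apply pb_eq; unfold pb_fst, pb_snd in *; simpl;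
      rewrite ?Hf, ?Hs, ?F1, ?S1, ?Eg, ?(gadd0r hX), ?(gaddNr hX); reflexivity.
Qed.

Lemma Cmap_pb_snd_inj (s t : Cab P) : Cmap pi_X s = Cmap pi_X t -> s = t.
Proof.
  destruct (etaP s) as [p ->], (etaP t) as [q ->].
  rewrite !(Cmap_eta pullback_group hX pb_snd_hom).
  intro E. apply (eta_inj_abelian hX hXab) in E.
  apply (eta_eq pullback_group).
  apply (pb_Comm_of_fst_Comm (b := gadd (pi_B p) (gopp (pi_B q)))); [|reflexivity|].
  - apply (eta_Comm hB). destruct p as [[b x] Hp], q as [[b' x'] Hq].
    unfold pb_snd, pb_fst in *; simpl in *. rewrite Hp, Hq, E. reflexivity.
  - change (gadd (pi_X p) (gopp (pi_X q)) = gzero). rewrite E. apply (gaddNr hX).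
Qed.

End Injectivity.
End PullbackAlongUnit.

Theorem corollary2p6 (B : PreOrdGrp) (X : PreOrdGrp) (hXab : is_abelian X)
  (phi : X -> Cab B) (hphi : is_hom X (Cab B) phi)
  (hsurj : forall c : Cab B, exists x : X, phi x = c)
  (hsurjP : forall c : Cab B, gpos c -> exists x : X, gpos x /\ phi x = c) :
  is_pullback_ab (Cab (pullback B X phi hphi)) (Cab B) (Cab X) (Cab (Cab B))
    (Cmap (pb_fst B X phi hphi)) (Cmap (pb_snd B X phi hphi))
    (Cmap (unit_eta B)) (Cmap phi).
Proof.
  pose proof (proj1 (pg_ax B)) as hB. pose proof (proj1 (pg_ax X)) as hX.
  pose proof (Cab_group hB) as hCB.
  pose proof (pullback_group hphi) as hP.
  apply is_pullback_ab_of_iso_mono.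
  - exact (Cmap_hom hP hB (pb_fst_hom hphi)).
  - exact (Cmap_hom hP hX (pb_snd_hom hphi)).
  - exact (Cmap_hom hB hCB (unit_eta_hom hB)).
  - exact (Cmap_hom hX hCB hphi).
  - apply pb_square_commutes.
  - exact (Cmap_pb_snd_inj hXab hsurj).
  - exact (Cmap_pb_snd_surj hphi).
  - exact (Cmap_pb_snd_pos_surj hphi).
  - exact (Cmap_unit_eta_inj hB).
Qed.
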